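(* Under the Standing setup, for any invocation $\textsc{MSSP}(I,H_I)$ occurring during the execution of $\textsc{MSSP}([0,k-1],G)$, any $i\in I$ and any vertex $u\in V(H_I)\setminus V_\infty$, there exists a path from $r_i$ to $u$ in $H_I[(V(H_I)\setminus V_\infty)\cup\{r_i\}]$.
   Context: Standing setup. $G=(V,E)$ is a planar embedded directed graph (embedding given by a rotation system, i.e. the clockwise order of edges around each vertex) with non-negative edge weights (weight $\infty$ allowed), in which shortest paths are unique. The infinite face $f_\infty$ is a simple directed cycle all of whose edges have weight $\infty$; $V_\infty=\{r_0,\dots,r_{k-1}\}$ is its vertex set in clockwise order. It is assumed that no shortest path contains an edge entering a vertex of $V_\infty$, and that for every $r_i$ and every $u\in V\setminus V_\infty$ there is a path from $r_i$ to $u$ meeting $V_\infty$ only in $r_i$. For a graph $H$, $d_H(x,y)$ is the shortest-path distance and $P_H[x,y]$ the shortest path; for a rooted tree $T$ and vertex $v$ other than the root, $\pi_T(v)$ is the parent of $v$ in $T$. Contracting an edge set $E'$ (written $H/E'$) merges each connected component of $E'$ into one vertex (identified with a designated vertex of the component), deletes self-loops, and keeps only the cheapest edge among parallel edges; the rotation system is inherited. Procedure $\textsc{MSSP}(I=[i_1,i_2],H_I)$ (initial call $\textsc{MSSP}([0,k-1],G)$; the initial call is at recursion level $0$ and calls it makes are at level $h+1$ if it is at level $h$): let $i=\lfloor (i_1+i_2)/2\rfloor$. For each $m\in\{i_1,i,i_2\}$ compute and store the shortest-path tree $T_{I,m}$ from $r_m$ in $H_I[(V(H_I)\setminus V_\infty)\cup\{r_m\}]$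 (more generally, $T_{I,m}$ denotes this tree for any $m\in I$). If $i_2-i_1\le1$, stop. Otherwise, for each $J=[j_1,j_2]\in\{[i_1,i],[i,i_2]\}$: start with $H_J:=H_I$; let $E_{shared}=E(T_{I,j_1})\cap E(T_{I,j_2})$ (a forest). For each vertex $s$ with $\pi_{T_{I,j_1}}(s)\ne\pi_{T_{I,j_2}}(s)$, let $T(s)$ be the tree rooted at $s$ consisting of every edge $(s,v)\in E_{shared}$ such that $(s,v),(s,\pi_{T_{I,j_1}}(s)),(s,\pi_{T_{I,j_2}}(s))$ are in clockwise order around $s$, together with all edges of $E_{shared}$ descending from such $v$; let $\mathcal T_J$ be the collection of these (vertex-disjoint, maximal) trees. For each $T(s)\in\mathcal T_J$: for every $u\in T(s)$ record $s_J(u):=s$ and $\delta_J(u):=d_{T(s)}(s,u)$; for every edge $(u,v)$ of $H_J$ with exactly one endpoint in $T(s)$, if $u\in T(s)$ increase its weight by $\delta_J(u)$, and if $v\in T(s)\setminus\{s\}$ set its weight to $\infty$; then contract $T(s)$ to a single vertex identified with $s$. For vertices $u$ of $H_I$ in no tree of $\mathcal T_J$, set $s_J(u):=u$, $\delta_J(u):=0$. Then call $\textsc{MSSP}(J,H_J)$. *)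

From HB Require Import structures.
From mathcomp Require Import all_boot all_order all_algebra.
From mathcomp Require Import constructive_ereal.

Set Implicit Arguments.
Unset Strict Implicit.
Unset Printing Implicit Defensive.

Import Order.TTheory GRing.Theory Num.Theory.

Section MSSPDefs.
Variables (V D : finType) (R : realDomainType).

(* A dart is an edge together with a side: (e, true) is the end of e at its
   tail (e traversed tail -> head), (e, false) the end at its head
   (e traversed head -> tail). *)
Definition dart := (D * bool)%type.

(* An embedded weighted digraph.  Vertices are a subset of V; edges a subset
   of the edge identifiers D; rot v is the clockwise cyclic order of the darts
   around v (the rotation system). *)
Record graph := Graph {
  gV : {set V};
  gE : {set D};
  tl : D -> V;
  hd : D -> V;
  wt : D -> \bar R;
  rot : V -> seq dart }.

Implicit Types (H : graph) (A : {set V}) (S T : {set D}) (p q : seq D).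

Definition dart_vertex H (d : dart) : V := if d.2 then tl H d.1 else hd H d.1.

Definition rotation_system H : Prop :=
  forall v, v \in gV H ->
    uniq (rot H v) /\
    forall d : dart, (d \in rot H v) = (d.1 \in gE H) && (dart_vertex H d == v).

(* face permutation: after traversing d, turn to the next dart clockwise *)
Definition face_perm H (d : dart) : dart :=
  let d' := (d.1, ~~ d.2) in next (rot H (dart_vertex H d')) d'.

Definition nfaces H : nat := fcard (face_perm H) [pred d : dart | d.1 \in gE H].

(* the rotation system is a planar (genus 0) embedding of the connected graph *)
Definition planar H : Prop := #|gV H| + nfaces H = #|gE H| + 2.

Fixpoint walk_in H A S (x y : V) p : bool :=
  match p with
  | [::] => x == y
  | e :: p' => [&& e \in S, e \in gE H, tl H e == x, tl H e \in A,
                   hd H e \in A & walk_in H A S (hd H e) y p']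
  end.

Definition weight H p : \bar R := (\sum_(e <- p) wt H e)%E.

Definition simple_walk H (x : V) p : bool := uniq (x :: map (hd H) p).

Definition shortest H (x y : V) p : Prop :=
  walk_in H (gV H) setT x y p /\
  forall q, walk_in H (gV H) setT x y q -> (weight H p <= weight H q)%E.

Definition nonneg_weights H : Prop := forall e, e \in gE H -> (0 <= wt H e)%E.

Definition endpoints_ok H : Prop :=
  forall e, e \in gE H -> (tl H e \in gV H) && (hd H e \in gV H).

Definition unique_shortest_paths H : Prop :=
  forall x y p q, shortest H x y p -> shortest H x y q ->
    simple_walk H x p -> simple_walk H x q -> weight H p != +oo%E -> p = q.

Definition no_shortest_enters H (Vi : {set V}) : Prop :=
  forall x y p, shortest H x y p -> weight H p != +oo%E ->
    forall e, e \in p -> hd H e \notin Vi.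

Definition Vinf (k : nat) (r : nat -> V) : {set V} := [set r (nat_of_ord i) | i : 'I_k].

(* the infinite face is a simple directed cycle of infinite-weight edges
   c_0, ..., c_{k-1}, c_i joining r_i to r_{i+1 mod k}, traversed by a face
   orbit in the order r_0, r_1, ... (the outer face orbit of face_perm runs
   clockwise). *)
Definition outer_face H (k : nat) (r : nat -> V) : Prop :=
  {in [pred i | i < k] &, injective r} /\
  exists (c : nat -> D) (dir : bool),
    forall i, i < k ->
      [/\ c i \in gE H, wt H (c i) = +oo%E,
          dart_vertex H (c i, dir) = r i,
          dart_vertex H (c i, ~~ dir) = r (i.+1 %% k)
        & face_perm H (c i, dir) = (c (i.+1 %% k), dir)].

Definition is_spt H (Vi : {set V}) (rt : V) T : Prop :=
  let A := (gV H :\: Vi) :|: [set rt] in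
  [/\ T \subset gE H,
      forall e, e \in T -> (tl H e \in A) && (hd H e \in A),
      forall x, x \in A -> x != rt -> #|[set e in T | hd H e == x]| = 1,
      forall e, e \in T -> hd H e != rt
    & forall x, x \in A -> exists p, walk_in H A T rt x p /\
        forall q, walk_in H A setT rt x q -> (weight H p <= weight H q)%E].

Definition pedge H T (s : V) : option D := [pick e in T | hd H e == s].

Definition rot_after (a : dart) (l : seq dart) : seq dart :=
  drop (index a l).+1 l ++ take (index a l) l.

Definition cw3 (l : seq dart) (a b c : dart) : bool :=
  [&& a \in l, b \in rot_after a l, c \in rot_after a l &
      index b (rot_after a l) < index c (rot_after a l)].

Definition branching H T1 T2 (s : V) : bool :=
  match pedge H T1 s, pedge H T2 s with
  | Some e1, Some e2 => tl H e1 != tl H e2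
  | _, _ => false
  end.

Definition troot_edges H T1 T2 (s : V) : {set D} :=
  match pedge H T1 s, pedge H T2 s with
  | Some e1, Some e2 =>
      [set e in T1 :&: T2 | (tl H e == s) && cw3 (rot H s) (e, true) (e1, false) (e2, false)]
  | _, _ => set0
  end.

Definition edge_rel H S : rel V :=
  fun a b => [exists e in S, (tl H e == a) && (hd H e == b)].

Definition tverts H T1 T2 (s : V) : {set V} :=
  s |: [set x | [exists e in troot_edges H T1 T2 s,
                   connect (edge_rel H (T1 :&: T2)) (hd H e) x]].

Definition tedges H T1 T2 (s : V) : {set D} :=
  troot_edges H T1 T2 s :|:
  [set e in T1 :&: T2 | tl H e \in tverts H T1 T2 s :\ s].

Definition reweight H (TV : {set V}) (s : V) (delta : V -> \bar R) (e : D) : \bar R :=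
  if (tl H e \in TV) (+) (hd H e \in TV) then
    if tl H e \in TV then (wt H e + delta (tl H e))%E
    else if hd H e \in TV :\ s then +oo%E else wt H e
  else wt H e.

Definition ren (TV : {set V}) (s x : V) : V := if x \in TV then s else x.

(* inherited rotation when contracting the edge e into its tail *)
Definition splice H (cur : seq dart) (e : D) : seq dart :=
  rot_after (e, true) cur ++ rot_after (e, false) (rot H (hd H e)).

Definition merged_rot H (s : V) (ord : seq D) : seq dart := foldl (splice H) (rot H s) ord.

(* ord lists the tree edges top-down (each tail already merged into s) *)
Definition topdown H (s : V) (ord : seq D) : Prop :=
  forall p1 e p2, ord = p1 ++ e :: p2 -> tl H e \in s :: map (hd H) p1.

(* E' : self-loops deleted and exactly one cheapest edge kept among parallel
   edges, in the contracted graph (endpoints renamed by ren TV s) *)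
Definition cheapest_sel H (TV : {set V}) (s : V) (w' : D -> \bar R) (E' : {set D}) : Prop :=
  let f := ren TV s in
  let L := [set e in gE H | f (tl H e) != f (hd H e)] in
  [/\ E' \subset L,
      forall e, e \in L ->
        #|[set e' in E' | (f (tl H e') == f (tl H e)) && (f (hd H e') == f (hd H e))]| = 1
    & forall e' e, e' \in E' -> e \in L ->
        f (tl H e') = f (tl H e) -> f (hd H e') = f (hd H e) -> (w' e' <= w' e)%E].

Definition contracted H (TV : {set V}) (s : V) (w' : D -> \bar R) (ord : seq D)
    (E' : {set D}) : graph :=
  Graph (gV H :\: (TV :\ s)) E' (fun e => ren TV s (tl H e)) (fun e => ren TV s (hd H e)) w'
        (fun x => [seq d <- (if x == s then merged_rot H s ord else rot H x) | d.1 \in E']).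

Definition tree_step (TV : {set V}) (TE : {set D}) (delta : V -> \bar R) (s : V)
    H H' : Prop :=
  let w' := reweight H TV s delta in
  exists (ord : seq D) (E' : {set D}),
    [/\ uniq ord, [set e | e \in ord] = TE, topdown H s ord,
        cheapest_sel H TV s w' E' & H' = contracted H TV s w' ord E'].

Fixpoint steps HI T1 T2 (delta : V -> \bar R) (ss : seq V) H H' : Prop :=
  match ss with
  | [::] => H' = H
  | s :: ss' => exists H1,
      tree_step (tverts HI T1 T2 s) (tedges HI T1 T2 s) delta s H H1 /\
      steps HI T1 T2 delta ss' H1 H'
  end.

(* H_J is obtained from H_I = HI using T1 = T_{I,j1}, T2 = T_{I,j2};
   delta u = d_{T(s)}(s,u) for u in T(s); trees processed in some order *)
Definition child_graph HI T1 T2 HJ : Prop :=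
  exists (ss : seq V) (delta : V -> \bar R),
    [/\ uniq ss,
        forall s, (s \in ss) = branching HI T1 T2 s,
        forall s, s \in ss -> forall u, u \in tverts HI T1 T2 s ->
          exists p, walk_in HI setT (tedges HI T1 T2 s) s u p /\ weight HI p = delta u
      & steps HI T1 T2 delta ss HI HJ].

(* invocation I H: MSSP(I, H) occurs during the execution of MSSP([0,k-1], G) *)
Inductive invocation (G : graph) (k : nat) (r : nat -> V) : nat * nat -> graph -> Prop :=
| inv_root : invocation G k r (0, k.-1) G
| inv_child (i1 i2 : nat) H (j1 j2 : nat) T1 T2 HJ :
    invocation G k r (i1, i2) H ->
    i1.+1 < i2 ->
    ((j1, j2) = (i1, (i1 + i2)./2) \/ (j1, j2) = ((i1 + i2)./2, i2)) ->
    is_spt H (Vinf k r) (r j1) T1 ->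
    is_spt H (Vinf k r) (r j2) T2 ->
    child_graph H T1 T2 HJ ->
    invocation G k r (j1, j2) HJ.

End MSSPDefs.

(* Contracting a tree T(s) maps every walk of H to a walk of the contracted
   graph (edges inside T(s) become self-loops and disappear, every other edge
   is replaced by the kept cheapest parallel edge), and fixes every vertex
   outside T(s) \ s.  The root r_i lies in no contracted tree, since tree
   vertices other than roots are heads of shortest-path-tree edges and roots
   are branching vertices, neither of which is in V_infty.  Distinct trees are
   disjoint, so each root survives the contraction of the others, and the
   reachability of V(H) \ V_infty from r_i propagates down the recursion. *)
From HB Require Import structures.
From mathcomp Require Import all_boot all_order all_algebra.
From mathcomp Require Import constructive_ereal.
From mathcomp Require Import zify.

Set Implicit Arguments.
Unset Strict Implicit.
Unset Printing Implicit Defensive.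

Lemma connect_eq_or_pred (T : finType) (e : rel T) a x :
  connect e a x -> x = a \/ exists y, e y x.
Proof.
case/connectP => p + ->; case/lastP: p => [|p z]; first by left.
by rewrite rcons_path last_rcons => /andP [_ ex]; right; exists (last a p).
Qed.

Section Contraction.
Variables (V D : finType) (R : realDomainType).
Implicit Types (H : graph V D R) (A : {set V}).

Definition reaches_all H (Vi : {set V}) (x : V) : Prop :=
  forall u, u \in gV H :\: Vi ->
    exists p, walk_in H ((gV H :\: Vi) :|: [set x]) setT x u p.

Lemma walk_in_contracted H TV s w' ord E' A A' x y p :
  cheapest_sel H TV s w' E' ->
  {homo ren TV s : z / z \in A >-> z \in A'} ->
  walk_in H A setT x y p ->
  exists q, walk_in (contracted H TV s w' ord E') A' setT
                    (ren TV s x) (ren TV s y) q.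
Proof.
move=> [_ card_par _] renA; elim: p x => [|e p IHp] x /=.
  by move=> /eqP ->; exists nil => /=.
case/andP => _ /and5P [eH /eqP <- tlA hdA /IHp [q Wq]].
have [loop|ne] := eqVneq (ren TV s (tl H e)) (ren TV s (hd H e)).
  by exists q; rewrite loop.
have eL : e \in [set e in gE H | ren TV s (tl H e) != ren TV s (hd H e)].
  by rewrite inE eH ne.
have /eqP/cards1P [e' par_e] := card_par _ eL.
have : e' \in [set e' in E' | (ren TV s (tl H e') == ren TV s (tl H e))
                           && (ren TV s (hd H e') == ren TV s (hd H e))].
  by rewrite par_e set11.
rewrite inE => /and3P [e'E /eqP tl_e' /eqP hd_e'].
by exists (e' :: q); rewrite /= in_setT e'E tl_e' hd_e' eqxx !renA.
Qed.

Lemma reaches_all_tree_step H H' (TV : {set V}) (TE : {set D}) delta s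
    (Vi : {set V}) ri :
  s \in gV H -> s \notin Vi -> ri \notin TV ->
  tree_step TV TE delta s H H' -> reaches_all H Vi ri -> reaches_all H' Vi ri.
Proof.
move=> sH sVi riTV [ord [E' [_ _ _ sel ->]]] reachH u.
rewrite inE /= inE => /andP [uVi /andP [uTV uH]].
have [p W] : exists p, walk_in H ((gV H :\: Vi) :|: [set ri]) setT ri u p.
  by apply: reachH; rewrite inE uVi uH.
have ren_ri : ren TV s ri = ri by rewrite /ren (negbTE riTV).
have ren_u : ren TV s u = u.
  by rewrite /ren; case: ifP => // uT; move: uTV; rewrite !inE uT andbT negbK => /eqP.
have renA : {homo ren TV s : z / z \in (gV H :\: Vi) :|: [set ri]
             >-> z \in (gV H :\: (TV :\ s) :\: Vi) :|: [set ri]}.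
  move=> z; rewrite /ren; case: ifP => zT; first by rewrite !inE sVi eqxx sH.
  by rewrite !inE zT andbF /= => /orP [/andP [-> ->]|->]; rewrite ?orbT.
have [q Wq] := walk_in_contracted ord sel renA W.
by rewrite ren_ri ren_u in Wq; exists q.
Qed.

Lemma reaches_all_steps HI T1 T2 delta (ss : seq V) (Vi : {set V}) ri :
  uniq ss ->
  {in ss, forall s, s \notin Vi} ->
  {in ss, forall s, ri \notin tverts HI T1 T2 s} ->
  {in ss &, forall s s', s != s' -> s' \notin tverts HI T1 T2 s} ->
  forall H H', {subset ss <= gV H} ->
  steps HI T1 T2 delta ss H H' -> reaches_all H Vi ri -> reaches_all H' Vi ri.
Proof.
elim: ss => [|s ss IHss] /=; first by move=> _ _ _ _ H H' _ ->.
move=> /andP [s_notin uss] ssVi ri_out disj H H' ssH [H1 [step rest]] reachH.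
have in_cons z : z \in ss -> z \in s :: ss by rewrite inE => ->; rewrite orbT.
apply: (IHss uss _ _ _ H1 _ _ rest).
- by move=> z /in_cons; apply: ssVi.
- by move=> z /in_cons; apply: ri_out.
- by move=> z z' /in_cons zs /in_cons z's; apply: disj.
- move=> z zs; have [ord [E' [_ _ _ _ ->]]] := step.
  have sz : s != z by apply: contraNneq s_notin => ->.
  have := disj s z (mem_head _ _) (in_cons _ zs) sz.
  rewrite /tverts !inE ssH ?in_cons // andbT.
  by apply: contra => /andP [_ ->].
- exact: reaches_all_tree_step (ssH _ (mem_head _ _)) (ssVi _ (mem_head _ _))
                               (ri_out _ (mem_head _ _)) step reachH.
Qed.

End Contraction.

Section ShortestPathTrees.
Variables (V D : finType) (R : realDomainType).
Variables (H : graph V D R) (Vi : {set V}).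

Lemma mem_tverts_shared_hd T1 T2 s x :
  x \in tverts H T1 T2 s -> x != s -> exists2 e, e \in T1 :&: T2 & hd H e = x.
Proof.
rewrite /tverts !inE => /orP [->//|] /existsP [e /andP [eT conn]] _.
have eT12 : e \in T1 :&: T2.
  move: eT; rewrite /troot_edges.
  case: (pedge H T1 s) => [e1|]; last by rewrite inE.
  case: (pedge H T2 s) => [e2|]; last by rewrite inE.
  by rewrite inE => /andP [].
case: (connect_eq_or_pred conn) => [->|[y]]; first by exists e.
by case/existsP => e' /andP [e'T /andP [_ /eqP]]; exists e'.
Qed.

Lemma spt_hd_notin rt T e : is_spt H Vi rt T -> e \in T -> hd H e \in gV H :\: Vi.
Proof.
case=> _ endsA _ hd_rt _ eT; have /andP [_] := endsA e eT.
by rewrite inE => /orP [//|]; rewrite inE (negbTE (hd_rt e eT)).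
Qed.

Lemma pedge_spt rt T e : is_spt H Vi rt T -> e \in T -> pedge H T (hd H e) = Some e.
Proof.
case=> _ endsA one_in hd_rt _ eT.
rewrite /pedge; case: pickP => [e1 /andP [e1T /eqP hd_e1]|none]; last first.
  by have := none e; rewrite eT eqxx.
have /andP [_ hdA] := endsA e eT.
have /eqP/cards1P [z in_z] := one_in _ hdA (hd_rt e eT).
have : e \in [set e0 in T | hd H e0 == hd H e] by rewrite inE eT eqxx.
have : e1 \in [set e0 in T | hd H e0 == hd H e] by rewrite inE e1T hd_e1 eqxx.
by rewrite in_z !inE => /eqP -> /eqP ->.
Qed.

Lemma shared_hd_not_branching rt1 rt2 T1 T2 e :
  is_spt H Vi rt1 T1 -> is_spt H Vi rt2 T2 ->
  e \in T1 :&: T2 -> ~~ branching H T1 T2 (hd H e).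
Proof.
move=> spt1 spt2; rewrite inE => /andP [e1 e2].
by rewrite /branching (pedge_spt spt1 e1) (pedge_spt spt2 e2) eqxx.
Qed.

Lemma branching_notin rt1 T1 T2 s :
  is_spt H Vi rt1 T1 -> branching H T1 T2 s -> s \in gV H :\: Vi.
Proof.
move=> spt1; rewrite /branching /pedge.
by case: pickP => [e1 /andP [e1T /eqP <-] _|//]; apply: spt_hd_notin spt1 e1T.
Qed.

End ShortestPathTrees.

Lemma invocation_bounds (V D : finType) (R : realDomainType) (G : graph V D R)
    k r I H :
  invocation G k r I H -> I.1 <= I.2 <= k.-1.
Proof.
elim => [|i1 i2 H0 j1 j2 T1 T2 HJ _ IH _ halves _ _ _] //=.
have mid := odd_double_half (i1 + i2); rewrite -addnn in mid.
by case: halves => [[-> ->]|[-> ->]]; move: IH => /=; lia.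
Qed.

Lemma reaches_all_invocation (V D : finType) (R : realDomainType)
    (G : graph V D R) k r :
  (forall i, i < k -> reaches_all G (Vinf k r) (r i)) ->
  forall I H, invocation G k r I H ->
  forall i, I.1 <= i <= I.2 -> i < k -> reaches_all H (Vinf k r) (r i).
Proof.
move=> reachG I0 H0; elim=> [|i1 i2 H j1 j2 T1 T2 HJ _ IH i12 halves spt1 spt2
                                [ss [delta [uss mem_ss _ st]]]] i /=.
  by move=> _; apply: reachG.
move=> ij ik; have riV : r i \in Vinf k r by apply/imsetP; exists (Ordinal ik).
have iI : i1 <= i <= i2.
  have mid := odd_double_half (i1 + i2); rewrite -addnn in mid.
  by case: halves => [[-> ->]|[-> ->]] in ij *; lia.
have ss_notin s : s \in ss -> s \in gV H :\: Vinf k r.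
  by rewrite mem_ss; apply: branching_notin spt1.
apply: (reaches_all_steps uss _ _ _ _ st (IH i iI ik)).
- by move=> s /ss_notin; rewrite inE => /andP [].
- move=> s /ss_notin sV; apply/negP => ri_s.
  have [eq_ri|ne] := eqVneq (r i) s; first by move: sV; rewrite -eq_ri inE riV.
  have [e eT hd_e] := mem_tverts_shared_hd ri_s ne.
  move: eT; rewrite inE => /andP [eT1 _].
  by have := spt_hd_notin spt1 eT1; rewrite hd_e inE riV.
- move=> s s' _ s's; rewrite eq_sym => ne; apply/negP => s'_s.
  have [e eT hd_e] := mem_tverts_shared_hd s'_s ne.
  by have := shared_hd_not_branching spt1 spt2 eT; rewrite hd_e -mem_ss s's.
- by move=> s /ss_notin; rewrite inE => /andP [].
Qed.

Theorem claim2 (V D : finType) (R : realDomainType) (G : graph V D R)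
    (k : nat) (r : nat -> V) :
  0 < k ->
  endpoints_ok G ->
  nonneg_weights G ->
  rotation_system G ->
  planar G ->
  outer_face G k r ->
  unique_shortest_paths G ->
  no_shortest_enters G (Vinf k r) ->
  (forall i, i < k -> forall u, u \in gV G :\: Vinf k r ->
     exists p, walk_in G ((gV G :\: Vinf k r) :|: [set r i]) setT (r i) u p) ->
  forall (I : nat * nat) (H : graph V D R), invocation G k r I H ->
  forall i, I.1 <= i <= I.2 ->
  forall u, u \in gV H :\: Vinf k r ->
    exists p, walk_in H ((gV H :\: Vinf k r) :|: [set r i]) setT (r i) u p.
Proof.
move=> k_gt0 _ _ _ _ _ _ _ reachG I H inv i iI.
have bounds := invocation_bounds inv.
apply: (reaches_all_invocation reachG inv iI).
by move: iI bounds k_gt0; lia.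
Qed.
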